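(* Let $N\ge3$, $h=1/N$, $\tau>0$, $\eta>0$, $\sigma\in\mathbb{R}$, $k\in\{2,3,4\}$, and let $\mathbf{X}^{m-p}=(x^{m-p},y^{m-p})^T\in\mathbb{X}^h$, $p=0,\dots,k-1$, be given. Let $\widetilde{\mathbf{X}}^{m+1}\in\mathbb{X}^h$ be the predicted curve (generated by the BDF$(k-1)$-ZJB scheme), with edges $\widetilde{\mathbf{h}}^{m+1}_j=\widetilde{\mathbf{X}}^{m+1}(\rho_j)-\widetilde{\mathbf{X}}^{m+1}(\rho_{j-1})$ and unit normals $\widetilde{\mathbf{n}}^{m+1}_j=(\widetilde n^{m+1}_{j,1},\widetilde n^{m+1}_{j,2})^T$ on $I_j$, $j=1,\dots,N$. Assume (i) $(\widetilde n^{m+1}_{1,1})^2+(\widetilde n^{m+1}_{N,1})^2>0$, and (ii) $\min_{1\le j\le N}|\widetilde{\mathbf{h}}^{m+1}_j|>0$. Then the linear system (BDF$k$-ZJB scheme): find $\mathbf{X}^{m+1}=(x^{m+1},y^{m+1})^T\in\mathbb{X}^h$ and $\kappa^{m+1}\in\mathbb{K}^h$ such that $$\Big\langle\tfrac{a\mathbf{X}^{m+1}-\widehat{\mathbf{X}}^m}{\tau},\widetilde{\mathbf{n}}^{m+1}\psi^h\Big\rangle^h_{\widetilde\Gamma^{m+1}}+\langle\partial_s\kappa^{m+1},\partial_s\psi^h\rangle_{\widetilde\Gamma^{m+1}}=0\quad\forall\psi^h\in\mathbb{K}^h,$$ $$\langle\kappa^{m+1}\widetilde{\mathbf{n}}^{m+1},\boldsymbol\omega^h\rangle^h_{\widetilde\Gamma^{m+1}}-\langle\partial_s\mathbf{X}^{m+1},\partial_s\boldsymbol\omega^h\rangle_{\widetilde\Gamma^{m+1}}+\sigma[\omega^h_1(1)-\omega^h_1(0)]$$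 $$-\frac1{\eta\tau}\Big[\big(a\,x^{m+1}(0)-\widehat x^m(0)\big)\omega^h_1(0)+\big(a\,x^{m+1}(1)-\widehat x^m(1)\big)\omega^h_1(1)\Big]=0\quad\forall\boldsymbol\omega^h=(\omega^h_1,\omega^h_2)^T\in\mathbb{X}^h,$$ is well-posed, i.e., it has a unique solution $(\mathbf{X}^{m+1},\kappa^{m+1})\in\mathbb{X}^h\times\mathbb{K}^h$.
   Context: Mesh: $\rho_j=jh$, $I_j=[\rho_{j-1},\rho_j]$. $\mathbb{K}^h$ = continuous functions on $[0,1]$ affine on each $I_j$; $\mathbb{K}^h_0=\{\psi\in\mathbb{K}^h:\psi(0)=\psi(1)=0\}$; $\mathbb{X}^h=\mathbb{K}^h\times\mathbb{K}^h_0$. For $\mathbf{Y}\in\mathbb{X}^h$ with edges $\mathbf{h}_j=\mathbf{Y}(\rho_j)-\mathbf{Y}(\rho_{j-1})\ne0$: normal on $I_j$ is $\big(-(\mathbf{h}_j)_2,(\mathbf{h}_j)_1\big)^T/|\mathbf{h}_j|$; $\partial_sf|_{I_j}=h\partial_\rho f|_{I_j}/|\mathbf{h}_j|$; $\langle u,v\rangle_{\mathbf{Y}}=\int_0^1u\cdot v|\partial_\rho\mathbf{Y}|d\rho$; $\langle u,v\rangle^h_{\mathbf{Y}}=\frac12\sum_{j=1}^N|\mathbf{h}_j|[(u\cdot v)(\rho_j^-)+(u\cdot v)(\rho_{j-1}^+)]$. $\widetilde\Gamma^{m+1}$ denotes the curve $\widetilde{\mathbf{X}}^{m+1}$, with respect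 to which normals, $\partial_s$ and inner products are taken. Coefficients: BDF2: $a=\frac32$, $\widehat{\mathbf{X}}^m=2\mathbf{X}^m-\frac12\mathbf{X}^{m-1}$; BDF3: $a=\frac{11}6$, $\widehat{\mathbf{X}}^m=3\mathbf{X}^m-\frac32\mathbf{X}^{m-1}+\frac13\mathbf{X}^{m-2}$; BDF4: $a=\frac{25}{12}$, $\widehat{\mathbf{X}}^m=4\mathbf{X}^m-3\mathbf{X}^{m-1}+\frac43\mathbf{X}^{m-2}-\frac14\mathbf{X}^{m-3}$; $\widehat x^m$ is the first component of $\widehat{\mathbf{X}}^m$. The BDF1-ZJB scheme is the ZJB (backward Euler) scheme, in which normals, $\partial_s$ and inner products are taken on the previous curve $\mathbf{X}^m$ and $a=1$, $\widehat{\mathbf{X}}^m=\mathbf{X}^m$; the BDF$j$-ZJB scheme uses as predicted curve the output of the BDF$(j-1)$-ZJB scheme. *)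

From HB Require Import structures.
From mathcomp Require Import all_boot all_order all_algebra.
From mathcomp Require Import reals.
Set Implicit Arguments. Unset Strict Implicit. Unset Printing Implicit Defensive.
Import Order.TTheory GRing.Theory Num.Theory.
Local Open Scope ring_scope.

(* Finite element functions in K^h on the uniform mesh rho_j = j h, h = 1/N,
   are represented by their nodal values (rho_0, ..., rho_N). *)
Section ZJB.
Context (R : realType) (N : nat).

Definition nodal := {ffun 'I_N.+1 -> R}.

Definition nv (f : nodal) (i : nat) : R := f (inord i).

Definition hmesh : R := (N%:R)^-1.

Definition in_K0 (f : nodal) : Prop := f ord0 = 0 /\ f ord_max = 0.

Definition dlt (f : nodal) (j : nat) : R := nv f j - nv f j.-1.

Definition elen (x y : nodal) (j : nat) : R :=
  Num.sqrt (dlt x j ^+ 2 + dlt y j ^+ 2).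

Definition nrm1 (x y : nodal) (j : nat) : R := - dlt y j / elen x y j.
Definition nrm2 (x y : nodal) (j : nat) : R := dlt x j / elen x y j.

(* mass-lumped inner product on the curve (x,y):
   1/2 sum_j |h_j| [ g(j, rho_j^-) + g(j, rho_{j-1}^+) ],
   where g j i is the value of u.v restricted to element I_j at node i *)
Definition lumped (x y : nodal) (g : nat -> nat -> R) : R :=
  2^-1 * \sum_(1 <= j < N.+1) elen x y j * (g j j + g j j.-1).

(* d_s f on I_j = h d_rho f / |h_j|, with d_rho f = (f_j - f_{j-1})/h on I_j *)
Definition ds (x y f : nodal) (j : nat) : R :=
  hmesh * (dlt f j / hmesh) / elen x y j.

(* <d_s f, d_s g>_Y = sum_j int_{I_j} d_s f d_s g |d_rho Y| drho, where the
   integrand is constant on I_j and |d_rho Y| = |h_j|/h there *)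
Definition stiff (x y f g : nodal) : R :=
  \sum_(1 <= j < N.+1) ds x y f j * ds x y g j * (hmesh * (elen x y j / hmesh)).

(* BDFk coefficients; X p stands for X^{m-p} *)
Definition bdf_a (k : nat) : R :=
  match k with
  | 2 => 3 / 2
  | 3 => 11 / 6
  | 4 => 25 / 12
  | _ => 1
  end.

Definition bdf_hat (k : nat) (X : nat -> nodal) : nodal :=
  [ffun i =>
    match k with
    | 2 => 2 * X 0%N i - 2^-1 * X 1%N i
    | 3 => 3 * X 0%N i - 3 / 2 * X 1%N i + 3^-1 * X 2%N i
    | 4 => 4 * X 0%N i - 3 * X 1%N i + 4 / 3 * X 2%N i - 4^-1 * X 3%N i
    | _ => X 0%N i
    end].

Definition zjb_solution (k : nat) (tau eta sigma : R)
    (xs ys : nat -> nodal) (xt yt : nodal) (x y kap : nodal) : Prop :=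
  let a := bdf_a k in
  let xh := bdf_hat k xs in
  let yh := bdf_hat k ys in
  in_K0 y /\
  (forall psi : nodal,
     lumped xt yt (fun j i =>
        ((a * nv x i - nv xh i) / tau * nrm1 xt yt j
         + (a * nv y i - nv yh i) / tau * nrm2 xt yt j) * nv psi i)
     + stiff xt yt kap psi = 0) /\
  (forall w1 w2 : nodal, in_K0 w2 ->
     lumped xt yt (fun j i =>
        nv kap i * nrm1 xt yt j * nv w1 i + nv kap i * nrm2 xt yt j * nv w2 i)
     - (stiff xt yt x w1 + stiff xt yt y w2)
     + sigma * (w1 ord_max - w1 ord0)
     - (eta * tau)^-1 * ((a * x ord0 - xh ord0) * w1 ord0
                         + (a * x ord_max - xh ord_max) * w1 ord_max) = 0).

End ZJB.

From HB Require Import structures.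
From mathcomp Require Import all_boot all_order all_algebra.
From mathcomp Require Import reals ring lra zify.
Set Implicit Arguments. Unset Strict Implicit. Unset Printing Implicit Defensive.
Import Order.TTheory GRing.Theory Num.Theory.
Local Open Scope ring_scope.

(* The scheme is a square linear system for the nodal values of (X, kappa), so
   it is well posed once the homogeneous system (zero data, sigma = 0) has only
   the trivial solution.  Testing it with psi = kappa and omega = X, the lumped
   coupling terms cancel and leave
     tau/a |d_s kappa|^2 + |d_s x|^2 + |d_s y|^2 + a/(eta tau) (x(0)^2 + x(1)^2) = 0.
   Hence x, y and kappa are constant, x(0) = 0 and y(0) = 0 give X = 0, and
   testing with the hat functions of the two end nodes in the first component
   gives kappa n_{1,1} = kappa n_{N,1} = 0, so kappa = 0 by (i). *)

Lemma linear_ker0_bijective (K : fieldType) (vT : vectType K) (f : vT -> vT) :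
  linear f -> (forall u, f u = 0 -> u = 0) -> forall v, exists! u, f u = v.
Proof.
move=> linf ker0 v.
pose fL : {linear vT -> vT} := HB.pack f (GRing.isLinear.Build K vT vT *:%R f linf).
have injf : injective fL by apply: raddf_inj; exact: ker0.
have kerF : lker (linfun fL) == 0%VS by apply/lker0P => u w; rewrite !lfunE; exact: injf.
have fK : cancel (linfun fL)^-1%VF f by move=> w; rewrite -[f _](lfunE fL) lker0_lfunVK.
exists ((linfun fL)^-1%VF v); split=> [|u fu_v]; first exact: fK.
by apply: injf; rewrite /= fK fu_v.
Qed.

HB.instance Definition _ (R : realType) (N : nat) :=
  Vector.copy (nodal R N) {ffun 'I_N.+1 -> R^o}.

Section NodalFunctions.
Variables (R : realType) (N : nat).
Local Notation nodal := (nodal R N).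

Definition hat (i : 'I_N.+1) : nodal := [ffun l => (l == i)%:R].

Lemma nodalZE (c : R) (f : nodal) i : (c *: f) i = c * f i.
Proof. by rewrite ffunE. Qed.

Lemma nodal0E i : (0 : nodal) i = 0 :> R.
Proof. by rewrite ffunE. Qed.

Lemma nodal_linear (c : R) (f g : nodal) i : (c *: f + g) i = c * f i + g i.
Proof. by rewrite ffunE nodalZE. Qed.

Lemma nodal_expand (f : nodal) : f = \sum_i f i *: hat i.
Proof.
apply/ffunP => l; rewrite sum_ffunE (bigD1 l) //= big1 => [|i /negbTE ni].
  by rewrite nodalZE !ffunE eqxx mulr1 addr0.
by rewrite nodalZE !ffunE eq_sym ni mulr0.
Qed.

Lemma scalar_nodal_expand (F : nodal -> R) : scalar F ->
  forall f, F f = \sum_i f i * F (hat i).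
Proof.
move=> linF f; pose FL : {scalar nodal} := HB.pack F (GRing.isLinear.Build R _ _ *%R F linF).
rewrite -[F f]/(FL f) {1}(nodal_expand f) linear_sum.
by apply: eq_bigr => i _; rewrite linearZ.
Qed.

Lemma scalar_pair_expand (F : nodal * nodal -> R) : scalar F ->
  forall w1 w2, F (w1, w2) = \sum_i w1 i * F (hat i, 0) + \sum_i w2 i * F (0, hat i).
Proof.
move=> linF w1 w2.
have linF1 : scalar (fun w => F (w, 0)).
  move=> c u v; rewrite -linF; congr F.
  by apply: injective_projections; rewrite /= ?scaler0 ?addr0.
have linF2 : scalar (fun w => F (0, w)).
  move=> c u v; rewrite -linF; congr F.
  by apply: injective_projections; rewrite /= ?scaler0 ?addr0.
have -> : F (w1, w2) = F (w1, 0) + F (0, w2).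
  rewrite -[F (w1, 0)]mul1r -linF; congr F.
  by apply: injective_projections; rewrite /= ?scale1r ?addr0 ?add0r.
by rewrite (scalar_nodal_expand linF1) (scalar_nodal_expand linF2).
Qed.

Lemma nv_ord (f : nodal) (i : 'I_N.+1) : nv f i = f i.
Proof. by rewrite /nv inord_val. Qed.

Lemma nv0 j : nv (0 : nodal) j = 0.
Proof. exact: nodal0E. Qed.

Lemma nv_linear c (f g : nodal) j : nv (c *: f + g) j = c * nv f j + nv g j.
Proof. exact: nodal_linear. Qed.

Lemma nv_hat (i : 'I_N.+1) j : (j <= N)%N -> nv (hat i) j = (j == i)%:R.
Proof. by move=> jN; rewrite /nv ffunE -val_eqE /= inordK. Qed.

Lemma dlt_eq0_const (f : nodal) :
  (forall j, (0 < j <= N)%N -> dlt f j = 0) -> forall i, f i = f ord0.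
Proof.
move=> dlt0 i.
have nv_const n : (n <= N)%N -> nv f n = nv f 0.
  elim: n => [//|n IH] nN; rewrite -IH ?(ltnW nN) //.
  by apply/eqP; rewrite -subr_eq0; apply/eqP/dlt0; rewrite nN.
by rewrite -nv_ord nv_const ?leq_ord // -(nv_ord f ord0).
Qed.

End NodalFunctions.

Arguments hat {R N} i.

Section DiscreteForms.
Variables (R : realType) (N : nat).
Context {xt yt : nodal R N}.
Local Notation nodal := (nodal R N).
Local Notation lumped := (lumped xt yt).
Local Notation stiff := (stiff xt yt).
Local Notation elen := (elen xt yt).

Lemma lumped_linear c (G1 G2 G : nat -> nat -> R) :
  (forall j i, G j i = c * G1 j i + G2 j i) -> lumped G = c * lumped G1 + lumped G2.
Proof.
move=> GE; rewrite /lumped !mulr_sumr -big_split; apply: eq_bigr => j _ /=.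
by rewrite !GE; ring.
Qed.

Lemma lumped_first (G : nat -> nat -> R) : (0 < N)%N ->
  (forall j i, (0 < i <= N)%N -> G j i = 0) -> lumped G = 2^-1 * (elen 1 * G 1%N 0%N).
Proof.
move=> N_gt0 G0; rewrite /lumped big_ltn ?ltnS // big_nat_cond big1.
  by rewrite (G0 1%N 1%N) ?N_gt0 ?add0r ?addr0.
by move=> j /andP[/andP[j2 jN] _]; rewrite !G0 ?addr0 ?mulr0 //; lia.
Qed.

Lemma lumped_last (G : nat -> nat -> R) : (0 < N)%N ->
  (forall j i, (i < N)%N -> G j i = 0) -> lumped G = 2^-1 * (elen N * G N N).
Proof.
move=> N_gt0 G0; rewrite /lumped big_nat_recr //= big_nat_cond big1.
  by rewrite (G0 N N.-1) ?add0r ?addr0 //; lia.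
by move=> j /andP[/andP[j1 jN] _]; rewrite !G0 ?addr0 ?mulr0 //; lia.
Qed.

Lemma stiffC (f g : nodal) : stiff f g = stiff g f.
Proof. by rewrite /stiff; apply: eq_bigr => j _; ring. Qed.

Lemma stiff_linearl c (f g h : nodal) : stiff (c *: f + g) h = c * stiff f h + stiff g h.
Proof.
rewrite /stiff mulr_sumr -big_split; apply: eq_bigr => j _ /=.
by rewrite /ds /dlt !nv_linear; ring.
Qed.

Lemma stiff_linearr c (f g h : nodal) : stiff h (c *: f + g) = c * stiff h f + stiff h g.
Proof. by rewrite !(stiffC h) stiff_linearl. Qed.

Lemma stiff0l (h : nodal) : stiff 0 h = 0.
Proof. by rewrite /stiff big1 // => j _; rewrite /ds /dlt !nv0 subrr !(mul0r, mulr0). Qed.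

Lemma stiff_diag (f : nodal) : stiff f f = \sum_(1 <= j < N.+1) dlt f j ^+ 2 / elen j.
Proof.
rewrite /stiff; apply: eq_big_nat => j /andP[j1 jN].
have h0 : hmesh R N != 0 by rewrite /hmesh invr_eq0 pnatr_eq0 -lt0n; lia.
rewrite /ds; have [->|e0] := eqVneq (elen j) 0; first by rewrite !(mulr0, mul0r, invr0).
by field; rewrite h0 e0.
Qed.

Lemma stiff_ge0 (f : nodal) : 0 <= stiff f f.
Proof.
by rewrite stiff_diag; apply: sumr_ge0 => j _; rewrite divr_ge0 ?sqr_ge0 ?sqrtr_ge0.
Qed.

Lemma stiff_eq0_const (f : nodal) : (forall j, (0 < j <= N)%N -> 0 < elen j) ->
  stiff f f = 0 -> forall i, f i = f ord0.
Proof.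
move=> elen_gt0 /eqP; rewrite stiff_diag big_nat_cond psumr_eq0 => [/allP d0|j _]; last first.
  by rewrite divr_ge0 ?sqr_ge0 ?sqrtr_ge0.
apply: dlt_eq0_const => j jN; apply/eqP; rewrite -sqrf_eq0.
have := d0 j; rewrite mem_index_iota ltnS jN andbT => /(_ isT) /implyP /(_ isT).
by rewrite mulf_eq0 invr_eq0 (gt_eqF (elen_gt0 _ jN)) orbF.
Qed.

End DiscreteForms.

Section LinearSystem.
Variables (R : realType) (N : nat) (xt yt : nodal R N) (a tau eta : R).
Local Notation nodal := (nodal R N).
Local Notation lumped := (lumped xt yt).
Local Notation stiff := (stiff xt yt).

Definition psi_integrand (xh yh x y psi : nodal) (j i : nat) : R :=
  ((a * nv x i - nv xh i) / tau * nrm1 xt yt j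
   + (a * nv y i - nv yh i) / tau * nrm2 xt yt j) * nv psi i.

Definition omega_integrand (kap w1 w2 : nodal) (j i : nat) : R :=
  nv kap i * nrm1 xt yt j * nv w1 i + nv kap i * nrm2 xt yt j * nv w2 i.

Definition res_psi (xh yh x y kap psi : nodal) : R :=
  lumped (psi_integrand xh yh x y psi) + stiff kap psi.

Definition res_omega (sigma : R) (xh x y kap w1 w2 : nodal) : R :=
  lumped (omega_integrand kap w1 w2) - (stiff x w1 + stiff y w2)
  + sigma * (w1 ord_max - w1 ord0)
  - (eta * tau)^-1 * ((a * x ord0 - xh ord0) * w1 ord0
                      + (a * x ord_max - xh ord_max) * w1 ord_max).

Definition solves (xh yh : nodal) (sigma : R) (u : nodal * nodal * nodal) : Prop :=
  in_K0 u.1.2 /\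
  (forall psi, res_psi xh yh u.1.1 u.1.2 u.2 psi = 0) /\
  (forall w1 w2, in_K0 w2 -> res_omega sigma xh u.1.1 u.1.2 u.2 w1 w2 = 0).

Lemma res_psi_linear c xh1 yh1 x1 y1 k1 xh2 yh2 x2 y2 k2 psi :
  res_psi (c *: xh1 + xh2) (c *: yh1 + yh2) (c *: x1 + x2) (c *: y1 + y2) (c *: k1 + k2) psi
  = c * res_psi xh1 yh1 x1 y1 k1 psi + res_psi xh2 yh2 x2 y2 k2 psi.
Proof.
rewrite /res_psi stiff_linearl (lumped_linear (c := c)
  (G1 := psi_integrand xh1 yh1 x1 y1 psi) (G2 := psi_integrand xh2 yh2 x2 y2 psi)).
  ring.
by move=> j i; rewrite /psi_integrand !nv_linear; ring.
Qed.

Lemma res_psi_scalar xh yh x y kap : scalar (res_psi xh yh x y kap).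
Proof.
move=> c psi1 psi2; rewrite /res_psi stiff_linearr (lumped_linear (c := c)
  (G1 := psi_integrand xh yh x y psi1) (G2 := psi_integrand xh yh x y psi2)).
  ring.
by move=> j i; rewrite /psi_integrand !nv_linear; ring.
Qed.

Lemma res_omega_linear c s1 xh1 x1 y1 k1 s2 xh2 x2 y2 k2 w1 w2 :
  res_omega (c * s1 + s2) (c *: xh1 + xh2) (c *: x1 + x2) (c *: y1 + y2) (c *: k1 + k2) w1 w2
  = c * res_omega s1 xh1 x1 y1 k1 w1 w2 + res_omega s2 xh2 x2 y2 k2 w1 w2.
Proof.
rewrite /res_omega !stiff_linearl (lumped_linear (c := c)
  (G1 := omega_integrand k1 w1 w2) (G2 := omega_integrand k2 w1 w2)).
  by rewrite !nodal_linear; ring.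
by move=> j i; rewrite /omega_integrand !nv_linear; ring.
Qed.

Lemma res_omega_scalar sigma xh x y kap :
  scalar (fun w : nodal * nodal => res_omega sigma xh x y kap w.1 w.2).
Proof.
move=> c [v1 v2] [u1 u2] /=; rewrite /res_omega !stiff_linearr (lumped_linear (c := c)
  (G1 := omega_integrand kap v1 v2) (G2 := omega_integrand kap u1 u2)).
  by rewrite !nodal_linear; ring.
by move=> j i; rewrite /omega_integrand !nv_linear; ring.
Qed.

Definition boundary (i : 'I_N.+1) : bool := (i == ord0) || (i == ord_max).

(* At the two end nodes the y-equation has no test function in K^h_0; it is
   replaced there by the boundary condition on y, which makes the system square. *)
Definition residual (xh yh : nodal) (sigma : R) (u : nodal * nodal * nodal) :
    nodal * nodal * nodal :=
  ([ffun i => res_psi xh yh u.1.1 u.1.2 u.2 (hat i)],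
   [ffun i => res_omega sigma xh u.1.1 u.1.2 u.2 (hat i) 0],
   [ffun i => if boundary i then u.1.2 i
              else res_omega sigma xh u.1.1 u.1.2 u.2 0 (hat i)]).

Lemma residual_linear c xh1 yh1 s1 u1 xh2 yh2 s2 u2 :
  residual (c *: xh1 + xh2) (c *: yh1 + yh2) (c * s1 + s2) (c *: u1 + u2)
  = c *: residual xh1 yh1 s1 u1 + residual xh2 yh2 s2 u2.
Proof.
case: u1 u2 => [[x1 y1] k1] [[x2 y2] k2].
do 2?apply: injective_projections => /=; apply/ffunP => i; rewrite nodal_linear !ffunE.
- exact: res_psi_linear.
- exact: res_omega_linear.
- by case: ifP => _; rewrite ?nodal_linear ?res_omega_linear.
Qed.

Lemma residual_eq0 xh yh sigma u : residual xh yh sigma u = 0 <-> solves xh yh sigma u.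
Proof.
case: u => [[x y] kap] /=; split=> [r0 | [[y0 yN] [eq_psi eq_omega]]].
  have r_psi i : res_psi xh yh x y kap (hat i) = 0.
    by have := congr1 (fun r : nodal * nodal * nodal => r.1.1 i) r0; rewrite !ffunE.
  have r_omega1 i : res_omega sigma xh x y kap (hat i) 0 = 0.
    by have := congr1 (fun r : nodal * nodal * nodal => r.1.2 i) r0; rewrite !ffunE.
  have r_omega2 i : (if boundary i then y i else res_omega sigma xh x y kap 0 (hat i)) = 0.
    by have := congr1 (fun r : nodal * nodal * nodal => r.2 i) r0; rewrite !ffunE.
  split; first split.
  - exact: (r_omega2 ord0).
  - by have := r_omega2 ord_max; rewrite /boundary eqxx orbT.
  split=> [psi | w1 w2 [w2_0 w2_N]].
    rewrite (scalar_nodal_expand (res_psi_scalar xh yh x y kap)).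
    by rewrite big1 // => i _; rewrite r_psi mulr0.
  rewrite (scalar_pair_expand (res_omega_scalar sigma xh x y kap)).
  rewrite !big1 ?addr0 // => i _; last by rewrite r_omega1 mulr0.
  have := r_omega2 i; case: (boolP (boundary i)) => [/orP[]/eqP-> _ | _ ->].
  - by rewrite w2_0 mul0r.
  - by rewrite w2_N mul0r.
  - by rewrite mulr0.
have K0_hat i : ~~ boundary i -> in_K0 (hat i : nodal).
  rewrite /boundary negb_or => /andP[i0 iN].
  by split; rewrite ffunE eq_sym ?(negbTE i0) ?(negbTE iN).
have K0_0 : in_K0 (0 : nodal) by split; rewrite ffunE.
do 2?apply: injective_projections => /=; apply/ffunP => i; rewrite !ffunE.
- exact: eq_psi.
- exact: eq_omega.
- by case: ifP => [/orP[]/eqP-> // | /negbT/K0_hat]; exact: eq_omega.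
Qed.

Hypotheses (a_gt0 : 0 < a) (tau_gt0 : 0 < tau) (eta_gt0 : 0 < eta) (N_gt0 : (0 < N)%N).
Hypothesis elen_gt0 : forall j, (0 < j <= N)%N -> 0 < elen xt yt j.
Hypothesis end_normals : 0 < nrm1 xt yt 1 ^+ 2 + nrm1 xt yt N ^+ 2.

Lemma solves0_energy x y kap : solves 0 0 0 (x, y, kap) ->
  tau / a * stiff kap kap + stiff x x + stiff y y
  + a / (eta * tau) * (x ord0 ^+ 2 + x ord_max ^+ 2) = 0.
Proof.
move=> [y_K0 [eq_psi eq_omega]].
have := eq_omega x y y_K0; have := eq_psi kap; rewrite /res_psi /res_omega /=.
have -> : lumped (psi_integrand 0 0 x y kap) = a / tau * lumped (omega_integrand kap x y).
  rewrite /lumped mulrCA; congr (_ * _); rewrite mulr_sumr; apply: eq_bigr => j _.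
  by rewrite /psi_integrand /omega_integrand !nv0; ring.
rewrite !ffunE mul0r addr0 !subr0; set L := lumped _ => e_psi e_omega.
rewrite -(mulr0 (tau / a)) -e_psi -[RHS]subr0 -e_omega.
by field; rewrite !gt_eqF.
Qed.

Lemma res_omega0_hat_first kap :
  res_omega 0 0 0 0 kap (hat ord0) 0 = 2^-1 * (elen xt yt 1 * (kap ord0 * nrm1 xt yt 1)).
Proof.
rewrite /res_omega !stiff0l !nodal0E (lumped_first N_gt0) => [|j i /andP[i0 iN]].
  rewrite /omega_integrand nv_hat // nv0 (nv_ord kap ord0) /=.
  by rewrite !(mulr0, mul0r, subr0, addr0, mulr1).
by rewrite /omega_integrand nv_hat // nv0 /= (gtn_eqF i0) !mulr0 addr0.
Qed.

Lemma res_omega0_hat_last kap :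
  res_omega 0 0 0 0 kap (hat ord_max) 0 = 2^-1 * (elen xt yt N * (kap ord_max * nrm1 xt yt N)).
Proof.
rewrite /res_omega !stiff0l !nodal0E (lumped_last N_gt0) => [|j i iN].
  rewrite /omega_integrand nv_hat // nv0 (nv_ord kap ord_max) eqxx.
  by rewrite !(mulr0, mul0r, subr0, addr0, mulr1).
by rewrite /omega_integrand nv_hat ?(ltnW iN) // nv0 /= (ltn_eqF iN) !mulr0 addr0.
Qed.

Lemma solves0_const x y kap : solves 0 0 0 (x, y, kap) ->
  [/\ x = 0, y = 0 & forall i, kap i = kap ord0].
Proof.
move=> sol; have energy := solves0_energy sol; have [[y_0 _] _] := sol.
have Sk_ge0 : 0 <= tau / a * stiff kap kap by rewrite mulr_ge0 ?stiff_ge0 // divr_ge0 // ltW.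
have B_ge0 : 0 <= a / (eta * tau) * (x ord0 ^+ 2 + x ord_max ^+ 2).
  by rewrite mulr_ge0 ?divr_ge0 ?mulr_ge0 ?addr_ge0 ?sqr_ge0 ?ltW.
have Sx_ge0 : 0 <= stiff x x := stiff_ge0 x.
have Sy_ge0 : 0 <= stiff y y := stiff_ge0 y.
have Sx0 : stiff x x = 0 by lra.
have Sy0 : stiff y y = 0 by lra.
have Sk0 : stiff kap kap = 0.
  have : tau / a * stiff kap kap = 0 by lra.
  by move/eqP; rewrite mulf_eq0 gt_eqF ?divr_gt0 // => /eqP.
have x_0 : x ord0 = 0.
  have : a / (eta * tau) * (x ord0 ^+ 2 + x ord_max ^+ 2) = 0 by lra.
  move/eqP; rewrite mulf_eq0 gt_eqF ?divr_gt0 ?mulr_gt0 //=.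
  by rewrite paddr_eq0 ?sqr_ge0 // sqrf_eq0 => /andP[/eqP].
split; last exact: stiff_eq0_const elen_gt0 Sk0.
- by apply/ffunP => i; rewrite (stiff_eq0_const elen_gt0 Sx0) x_0 nodal0E.
- by apply/ffunP => i; rewrite (stiff_eq0_const elen_gt0 Sy0) y_0 nodal0E.
Qed.

Lemma solves0_eq0 u : solves 0 0 0 u -> u = 0.
Proof.
case: u => [[x y] kap] sol; have [x0 y0 kc] := solves0_const sol.
have [_ [_ eq_omega]] := sol.
have K0_0 : in_K0 (0 : nodal) by split; apply: nodal0E.
have end_eq0 (e z : R) : 0 < e -> 2^-1 * (e * z) = 0 -> z = 0.
  by move=> e_gt0 /eqP; rewrite !mulf_eq0 invr_eq0 pnatr_eq0 (gt_eqF e_gt0) /= => /eqP.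
have k1 : kap ord0 * nrm1 xt yt 1 = 0.
  apply: (end_eq0 (elen xt yt 1)); first exact: elen_gt0.
  by move: (eq_omega (hat ord0) 0 K0_0); rewrite x0 y0 res_omega0_hat_first.
have kN : kap ord0 * nrm1 xt yt N = 0.
  apply: (end_eq0 (elen xt yt N)); first by rewrite elen_gt0 ?N_gt0 /=.
  by move: (eq_omega (hat ord_max) 0 K0_0); rewrite x0 y0 res_omega0_hat_last kc.
have k_0 : kap ord0 = 0.
  have : kap ord0 ^+ 2 * (nrm1 xt yt 1 ^+ 2 + nrm1 xt yt N ^+ 2) = 0.
    by rewrite mulrDr -!exprMn k1 kN !expr2 !mul0r addr0.
  by move/eqP; rewrite mulf_eq0 (gt_eqF end_normals) orbF sqrf_eq0 => /eqP.
have k0 : kap = 0 by apply/ffunP => i; rewrite kc k_0 nodal0E.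
by rewrite x0 y0 k0.
Qed.

Lemma residual_uniq_root xh yh sigma : exists! u, residual xh yh sigma u = 0.
Proof.
pose T := residual 0 0 0.
have T_linear : linear T.
  by move=> c w1 w2; rewrite /T -residual_linear scaler0 mulr0 !addr0.
have T_ker0 u : T u = 0 -> u = 0 by move/residual_eq0/solves0_eq0.
have residualE u : residual xh yh sigma u = T u + residual xh yh sigma 0.
  by have := residual_linear 1 0 0 0 u xh yh sigma 0; rewrite !scale1r mul1r !add0r addr0.
have [u [Tu u_uniq]] := linear_ker0_bijective T_linear T_ker0 (- residual xh yh sigma 0).
exists u; split=> [|v]; first by rewrite residualE Tu addNr.
by rewrite residualE => /eqP; rewrite addr_eq0 => /eqP /u_uniq.
Qed.

End LinearSystem.

Lemma bdf_a_gt0 (R : realType) k : 0 < bdf_a R k.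
Proof. by case: k => [|[|[|[|[|k]]]]] //=; rewrite divr_gt0. Qed.

Theorem theorem3p2 (R : realType) (N : nat) (tau eta sigma : R) (k : nat)
    (xs ys : nat -> nodal R N) (xt yt : nodal R N) :
  (3 <= N)%N -> 0 < tau -> 0 < eta -> k \in [:: 2%N; 3%N; 4%N] ->
  (forall p, (p < k)%N -> in_K0 (ys p)) ->
  in_K0 yt ->
  0 < nrm1 xt yt 1 ^+ 2 + nrm1 xt yt N ^+ 2 ->
  0 < \big[Num.min/elen xt yt 1]_(1 <= j < N.+1) elen xt yt j ->
  exists! s : nodal R N * nodal R N * nodal R N,
    zjb_solution k tau eta sigma xs ys xt yt s.1.1 s.1.2 s.2.
Proof.
move=> N_ge3 tau_gt0 eta_gt0 _ _ _ end_normals min_elen_gt0.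
have elen_gt0 j : (0 < j <= N)%N -> 0 < elen xt yt j.
  move=> jN; apply: (lt_le_trans min_elen_gt0); apply: ge_bigmin_seq => //.
  by rewrite mem_index_iota ltnS.
have [u [u_root u_uniq]] := residual_uniq_root (bdf_a_gt0 R k) tau_gt0 eta_gt0
  (ltnW (ltnW N_ge3)) elen_gt0 end_normals (bdf_hat k xs) (bdf_hat k ys) sigma.
exists u; split=> [|v]; first exact/residual_eq0.
by move/residual_eq0/u_uniq.
Qed.
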